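(* Let $p,q$ be positive integers with $\frac1p+\frac1q=\frac12$ and let $M$ be a $\{p,q\}$-map. Then the sum $I_v^b$ of the curvatures of the exterior vertices of $M$ satisfies $I_v^b\ge p$.
   Context: A map is a finite, connected, simply connected 2-complex embedded in the plane; degree of a vertex = number of oriented edges starting there (loops count twice), degree of a face = length of its boundary path. Exterior vertices are those on the boundary path of $M$. A $(p,q)$-map: every interior face has degree $\ge p$ and every interior vertex degree $\ge q$. A $\{p,q\}$-map is a $(p,q)$-map in which every face has degree at least $p$ and less than $2p$ and every vertex has degree less than $2q$. The curvature of a vertex $o$ is $\frac pq(q-d(o))-\mu(o)$, where $\mu(o)$ is the number of times the boundary path of $M$ passes through $o$. *)

From mathcomp Require Import all_boot all_order all_algebra perm.
Set Implicit Arguments. Unset Strict Implicit. Unset Printing Implicit Defensive.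
Import Order.TTheory GRing.Theory Num.Theory.

(* A map is encoded as a connected planar rotation system on the sphere
   (darts D, vertex rotation sigma, fixed-point-free edge involution alpha)
   together with a distinguished dart d0 whose face is the exterior face.
   The 2-complex M is the sphere minus the open exterior face. *)

Section Maps.
Variable D : finType.
Variables (sigma alpha : {perm D}) (d0 : D).

Definition phi (d : D) : D := sigma (alpha d).

Definition is_plane_map : Prop :=
  [/\ (forall d, alpha (alpha d) = d),
      (forall d, alpha d != d),
      (forall d e, connect [rel x y | (y == sigma x) || (y == alpha x)] d e)
    & (fcard sigma D + fcard phi D = #|D| %/ 2 + 2)%N].

Definition vdeg (d : D) : nat := fingraph.order sigma d.
Definition fdeg (d : D) : nat := fingraph.order phi d.
Definition on_boundary (d : D) : bool := fconnect phi d0 d.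
(* mu(o) : number of times the boundary path passes through the vertex o of d *)
Definition mu (d : D) : nat := #|[pred e | fconnect sigma d e && on_boundary e]|.
Definition interior_vertex (d : D) : bool := mu d == 0%N.

Definition pq_map (p q : nat) : Prop :=
  (forall d, ~~ on_boundary d -> p <= fdeg d)%N /\
  (forall d, interior_vertex d -> q <= vdeg d)%N.

Definition curly_pq_map (p q : nat) : Prop :=
  [/\ pq_map p q,
      (forall d, ~~ on_boundary d -> p <= fdeg d < 2 * p)%N
    & (forall d, vdeg d < 2 * q)%N].

Definition curvature (p q : nat) (d : D) : rat :=
  (p%:R / q%:R) * (q%:R - (vdeg d)%:R) - (mu d)%:R.

Definition Ivb (p q : nat) : rat :=
  \sum_(d in froots sigma | ~~ interior_vertex d) curvature p q d.
End Maps.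

(* Since 1/p + 1/q = 1/2 we have p/q = p/2 - 1, so the total curvature of
   the vertices is p V - (p/2 - 1) 2E - L, where L is the length of the
   boundary path; Euler's formula V - E + F = 2 turns this into
   2E + 2p - p F - L.  Every face but the exterior one is interior, with at
   least p darts, none of them on the boundary path; hence p (F - 1) <= 2E - L
   and the total curvature is at least p.
   Interior vertices have degree at least q, hence nonpositive curvature, and
   the exterior vertices alone carry curvature at least p.  Only the lower
   degree bounds of a (p,q)-map are used. *)

From mathcomp Require Import all_boot all_order all_algebra perm.
From mathcomp Require Import ring lra.
Set Implicit Arguments. Unset Strict Implicit. Unset Printing Implicit Defensive.
Import Order.TTheory GRing.Theory Num.Theory.

Section Orbits.
Variables (T : finType) (f : T -> T).
Hypothesis f_inj : injective f.

Lemma fcardT : fcard f T = #|froots f|.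
Proof. by apply: eq_card => x; rewrite !inE andbT. Qed.

Lemma big_froots (R : Type) (idx : R) (op : Monoid.com_law idx)
    (P : pred T) (F : T -> R) :
  \big[op/idx]_(x | P x) F x =
  \big[op/idx]_(r in froots f) \big[op/idx]_(x | fconnect f r x && P x) F x.
Proof.
have symf := fconnect_sym f_inj.
rewrite (partition_big (froot f) (froots f)) => [|x _]; last exact: roots_root.
apply: eq_bigr => r /eqP r_root; apply: eq_bigl => x.
by rewrite -[X in _ == X]r_root root_connect // symf andbC.
Qed.

Lemma card_froots (P : pred T) :
  #|P| = (\sum_(r in froots f) #|[pred x | fconnect f r x && P x]|)%N.
Proof.
rewrite -sum1_card big_froots.
by apply: eq_bigr => r _; rewrite sum1dep_card; apply: eq_card => x; rewrite inE.
Qed.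

Lemma sum_order : (\sum_(r in froots f) fingraph.order f r)%N = #|T|.
Proof.
rewrite (card_froots predT); apply: eq_bigr => r _.
by apply: eq_card => x; rewrite !inE andbT.
Qed.

End Orbits.

Section Involution.
Variables (T : finType) (f : T -> T).
Hypotheses (f_invol : involutive f) (f_fpf : forall x, f x != x).

Lemma order_fpf_involution x : fingraph.order f x = 2.
Proof.
have cyc : fcycle f [:: x; f x] by rewrite /= f_invol !eqxx.
have uniq_x : uniq [:: x; f x] by rewrite /= inE eq_sym f_fpf.
exact: (order_cycle cyc uniq_x (mem_head _ _)).
Qed.

Lemma card_fpf_involution : #|T| = (fcard f T * 2)%N.
Proof.
rewrite (fcard_order_set (can_inj f_invol)) //.
by apply/subsetP => x _; rewrite inE order_fpf_involution.
Qed.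

End Involution.

Lemma div_harmonic_half (R : fieldType) (P Q : R) :
  (P != 0 -> P^-1 + Q^-1 = 2^-1 -> P / Q = P / 2 - 1)%R.
Proof.
move=> P_neq0 harmonic.
by rewrite -[(Q^-1)%R](addKr (P^-1)%R) harmonic mulrDr mulrN mulfV // addrC.
Qed.

Section Maps.
Variables (D : finType) (sigma alpha : {perm D}) (d0 : D).
Local Notation phi := (phi sigma alpha).
Local Notation on_boundary := (on_boundary sigma alpha d0).
Local Notation mu := (mu sigma alpha d0).
Local Notation interior_vertex := (interior_vertex sigma alpha d0).
Local Notation curvature := (curvature sigma alpha d0).
Local Notation Ivb := (Ivb sigma alpha d0).

Lemma phi_inj : injective phi.
Proof. by move=> x y /perm_inj /perm_inj. Qed.

Lemma euler_darts : is_plane_map sigma alpha ->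
  (2 * (fcard sigma D + fcard phi D) = #|D| + 4)%N.
Proof.
case=> alpha_invol alpha_fpf _ euler.
have darts := card_fpf_involution alpha_invol alpha_fpf.
by rewrite euler {1 2}darts mulnK // mulnDr mulnC.
Qed.

Lemma sum_mu : (\sum_(r in froots sigma) mu r)%N = #|on_boundary|.
Proof. by rewrite (card_froots (f := sigma) perm_inj). Qed.

Definition interior_faces : nat := #|[pred r in froots phi | ~~ on_boundary r]|.

Lemma card_faces_le : (#|froots phi| <= interior_faces + 1)%N.
Proof.
have symf := fconnect_sym phi_inj.
rewrite -(cardID on_boundary (froots phi)) addnC leq_add //.
  by apply: eq_leq; apply: eq_card => r; rewrite !inE; exact: andbC.
rewrite -(card1 (froot phi d0)); apply: subset_leq_card; apply/subsetP => r.
rewrite !inE => /andP[/eqP r_root d0r].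
by rewrite -r_root (root_connect symf) symf.
Qed.

Lemma interior_face_closed r x :
  ~~ on_boundary r -> fconnect phi r x -> ~~ on_boundary x.
Proof.
move=> r_int rx; apply: contra r_int => /connect_trans; apply.
by rewrite (fconnect_sym phi_inj).
Qed.

Lemma interior_faces_bound p :
  (forall d, ~~ on_boundary d -> p <= fdeg sigma alpha d)%N ->
  (p * interior_faces <= #|[pred d | ~~ on_boundary d]|)%N.
Proof.
move=> face_deg.
have -> : interior_faces = (\sum_(r in froots phi | ~~ on_boundary r) 1)%N.
  by rewrite sum1dep_card; apply: eq_card => r; rewrite !inE.
rewrite big_distrr /= (card_froots phi_inj) [X in (_ <= X)%N](bigID on_boundary) /=.
apply: leq_trans (leq_addl _ _); apply: leq_sum => r /andP[_ r_int].
rewrite muln1; apply: leq_trans (face_deg r r_int) _.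
apply: subset_leq_card; apply/subsetP => x; rewrite !inE => rx.
by rewrite rx (interior_face_closed r_int rx).
Qed.

Local Open Scope ring_scope.

Lemma curvature_le0 p q d :
  interior_vertex d -> (q <= vdeg sigma d)%N ->
  curvature p q d <= 0.
Proof.
move=> /eqP d_int deg_d; rewrite /curvature d_int subr0.
by rewrite mulr_ge0_le0 ?divr_ge0 // subr_le0 ler_nat.
Qed.

Lemma sum_curvature p q : (0 < q)%N ->
  \sum_(r in froots sigma) curvature p q r =
  p%:R * (fcard sigma D)%:R - p%:R / q%:R * #|D|%:R - #|on_boundary|%:R.
Proof.
move=> q_gt0; have q_neq0 : q%:R != 0 :> rat by rewrite pnatr_eq0 -lt0n.
rewrite /curvature sumrB -mulr_sumr sumrB sumr_const -!natr_sum.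
rewrite (sum_order perm_inj) fcardT -mulr_natr.
by rewrite sum_mu; field.
Qed.

Lemma sum_curvature_ge p q :
  (0 < p)%N -> (0 < q)%N -> p%:R^-1 + q%:R^-1 = 2^-1 :> rat ->
  is_plane_map sigma alpha ->
  (forall d, ~~ on_boundary d -> p <= fdeg sigma alpha d)%N ->
  p%:R <= \sum_(r in froots sigma) curvature p q r.
Proof.
move=> p_gt0 q_gt0 harmonic plane face_deg.
have p_neq0 : p%:R != 0 :> rat by rewrite pnatr_eq0 -lt0n.
rewrite sum_curvature // div_harmonic_half //.
have := euler_darts plane; rewrite !fcardT => /(congr1 (fun n => n%:R : rat)).
rewrite natrM !natrD => euler.
have := card_faces_le; rewrite -(ler_nat rat) natrD => faces.
have := interior_faces_bound face_deg; rewrite -(ler_nat rat) natrM => interior.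
have darts : #|on_boundary|%:R + #|[pred d | ~~ on_boundary d]|%:R = #|D|%:R :> rat.
  by rewrite -natrD -(cardC on_boundary).
have := ler_wpM2l (ler0n _ p) faces.
have := congr1 (GRing.mul p%:R) euler.
lra.
Qed.

Lemma sum_curvature_le_Ivb p q :
  (forall d, interior_vertex d -> q <= vdeg sigma d)%N ->
  \sum_(r in froots sigma) curvature p q r <= Ivb p q.
Proof.
move=> vertex_deg; rewrite (bigID (interior_vertex)) /= gerDr.
by apply: sumr_le0 => r /andP[_ r_int]; exact: curvature_le0 (vertex_deg r r_int).
Qed.

End Maps.

Theorem lemma2p12 (p q : nat) (D : finType) (sigma alpha : {perm D}) (d0 : D) :
  (0 < p)%N -> (0 < q)%N ->
  ((p%:R : rat)^-1 + (q%:R : rat)^-1 = 2%:R^-1)%R ->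
  is_plane_map sigma alpha ->
  curly_pq_map sigma alpha d0 p q ->
  (p%:R <= Ivb sigma alpha d0 p q)%R.
Proof.
move=> p_gt0 q_gt0 harmonic plane [[face_deg vertex_deg] _ _].
apply: le_trans (sum_curvature_le_Ivb p vertex_deg).
exact: sum_curvature_ge.
Qed.
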